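(* Let $p^*\in(0,1)$ be the solution of $p^{(2-p)/(1-p)}=(1-p)^2$ ($p^*\approx0.594$). For every $p\in[p^*,1)$ and every integer $\ell\ge0$, \[ \int_{p^{1/(1-p)}}^1\frac{(1-t)^\ell}{t^p}\,dt\ \ge\ (1-p)^\ell . \] *)

From Stdlib Require Import Reals.
From Coquelicot Require Import Coquelicot.
Open Scope R_scope.

Definition pstar_eq (p : R) : Prop :=
  Rpower p ((2 - p) / (1 - p)) = (1 - p) ^ 2.

(* Since [x ^ l] is convex on [0, +oo), [(1 - t) ^ l] lies above its tangent line at
   [1 - t = 1 - p]; integrating this affine minorant against [t ^ (-p)] is explicit.
   At the lower endpoint [a = p ^ (1 / (1 - p))] one has [a ^ (1 - p) = p], and the
   resulting bound is at least [(1 - p) ^ l] exactly when [(1 - p) ^ 2 <= p * a], i.e.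
   [(1 - p) ^ 2 <= p ^ ((2 - p) / (1 - p))]. In logarithmic form this says that
   [(2 - p) / (1 - p) * ln p - 2 * ln (1 - p)] is nonnegative; that function is
   increasing on (0, 1) and vanishes at [p^*]. *)
From Stdlib Require Import Reals Lra.
From Coquelicot Require Import Coquelicot.
Open Scope R_scope.

Lemma pow_tangent_le (n : nat) (x c : R) : 0 <= x -> 0 <= c ->
  c ^ n + INR n * c ^ pred n * (x - c) <= x ^ n.
Proof.
  intros Hx Hc; destruct n as [|m]; [simpl; lra|]; simpl pred.
  induction m as [|m IH]; [simpl; lra|].
  assert (Hcm : 0 <= c ^ m) by (apply pow_le; lra).
  assert (Hsq : 0 <= INR (S m) * c ^ m * ((x - c) * (x - c))).
  { apply Rmult_le_pos; [apply Rmult_le_pos; [apply pos_INR | lra] | apply Rle_0_sqr]. }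
  assert (Hmul : x * (c ^ S m + INR (S m) * c ^ m * (x - c)) <= x * x ^ S m)
    by (apply Rmult_le_compat_l; lra).
  rewrite S_INR; simpl pow in *; nra.
Qed.

Lemma Rpower_pos (x y : R) : 0 < Rpower x y.
Proof. apply exp_pos. Qed.

Lemma Rpower_1_l (y : R) : Rpower 1 y = 1.
Proof. unfold Rpower; rewrite ln_1, Rmult_0_r; apply exp_0. Qed.

Lemma Rpower_lt_1 (x y : R) : 0 < x < 1 -> 0 < y -> Rpower x y < 1.
Proof.
  intros Hx Hy.
  assert (Hln : ln x < 0) by (rewrite <- ln_1; apply ln_increasing; lra).
  rewrite <- exp_0; apply exp_increasing; nra.
Qed.

Lemma exp_le_exp (x y : R) : x <= y -> exp x <= exp y.
Proof.
  intros [Hlt | ->]; [left; apply exp_increasing, Hlt | right; reflexivity].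
Qed.

Lemma sub1_le_mul_ln (z : R) : 0 < z -> z - 1 <= z * ln z.
Proof.
  intros Hz.
  pose proof (exp_ineq1_le (ln (/ z))) as Hexp.
  rewrite exp_ln, ln_Rinv in Hexp by (try apply Rinv_0_lt_compat; lra).
  assert (Hmul : z * (1 - ln z) <= z * / z) by (apply Rmult_le_compat_l; lra).
  rewrite Rinv_r in Hmul; lra.
Qed.

Section AffineOverPower.

Variables (p A B : R).
Hypotheses (Hp1 : p <> 1) (Hp2 : p <> 2).

Definition affine_over_power_primitive (t : R) : R :=
  (A + B) / (1 - p) * Rpower t (1 - p) - B / (2 - p) * Rpower t (2 - p).

Lemma is_derive_affine_over_power_primitive (t : R) : 0 < t ->
  is_derive affine_over_power_primitive t ((A + B * (1 - t)) / Rpower t p).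
Proof.
  intros Ht; unfold affine_over_power_primitive, Rpower; auto_derive; [lra|].
  assert (Hpos : exp (p * ln t) <> 0) by apply Rgt_not_eq, exp_pos.
  assert (E1 : exp ((1 - p) * ln t) = t / exp (p * ln t)).
  { replace ((1 - p) * ln t) with (ln t + - (p * ln t)) by ring.
    rewrite exp_plus, exp_Ropp, exp_ln by lra; reflexivity. }
  assert (E2 : exp ((2 - p) * ln t) = t * t / exp (p * ln t)).
  { replace ((2 - p) * ln t) with (ln t + (ln t + - (p * ln t))) by ring.
    rewrite !exp_plus, exp_Ropp, exp_ln by lra; unfold Rdiv; ring. }
  rewrite E1, E2; field; repeat split; lra.
Qed.

Lemma is_RInt_affine_over_power (a b : R) : 0 < a <= b ->
  is_RInt (fun t => (A + B * (1 - t)) / Rpower t p) a b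
    (affine_over_power_primitive b - affine_over_power_primitive a).
Proof.
  intros Hab.
  apply (@is_RInt_derive R_CompleteNormedModule); intros x Hx;
    rewrite Rmin_left in Hx by lra.
  - apply is_derive_affine_over_power_primitive; lra.
  - apply (@ex_derive_continuous R_AbsRing); unfold Rpower; auto_derive.
    repeat split; try lra; apply Rgt_not_eq, exp_pos.
Qed.

End AffineOverPower.

Lemma continuous_pow_div_Rpower (p t : R) (l : nat) : 0 < t ->
  continuous (fun t => (1 - t) ^ l / Rpower t p) t.
Proof.
  intros Ht; apply (@ex_derive_continuous R_AbsRing); unfold Rpower; auto_derive.
  repeat split; [lra | apply Rgt_not_eq, exp_pos].
Qed.

(* Integrating the tangent-line minorant of [(1 - t) ^ l] at [1 - t = c]. *)
Lemma RInt_pow_div_Rpower_ge (p c a : R) (l : nat) :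
  p <> 1 -> p <> 2 -> 0 <= c -> 0 < a <= 1 ->
  let B := INR l * c ^ pred l in
  affine_over_power_primitive p (c ^ l - B * c) B 1
    - affine_over_power_primitive p (c ^ l - B * c) B a
  <= RInt (fun t => (1 - t) ^ l / Rpower t p) a 1.
Proof.
  intros Hp1 Hp2 Hc Ha B.
  pose proof (is_RInt_affine_over_power p (c ^ l - B * c) B Hp1 Hp2 a 1 Ha) as Haff.
  rewrite <- (is_RInt_unique _ _ _ _ Haff).
  apply RInt_le; [lra | eexists; exact Haff | |].
  - apply (@ex_RInt_continuous R_CompleteNormedModule); intros z Hz.
    rewrite Rmin_left in Hz by lra; apply continuous_pow_div_Rpower; lra.
  - intros t Ht; unfold Rdiv; apply Rmult_le_compat_r.
    + left; apply Rinv_0_lt_compat, Rpower_pos.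
    + pose proof (pow_tangent_le l (1 - t) c ltac:(lra) Hc); unfold B; lra.
Qed.

Definition pstar_defect (x : R) : R := (2 - x) / (1 - x) * ln x - 2 * ln (1 - x).

Lemma pstar_defect_increasing (x y : R) : 0 < x -> x < y -> y < 1 ->
  pstar_defect x < pstar_defect y.
Proof.
  intros Hx Hxy Hy.
  apply (incr_function pstar_defect (Finite 0) (Finite 1)
    (fun z => (z * ln z + (2 - z) * (1 - z) + 2 * z * (1 - z)) / ((1 - z) * (1 - z) * z)));
    simpl; try lra.
  - intros z Hz0 Hz1; unfold pstar_defect; auto_derive.
    + repeat split; lra.
    + field; lra.
  - intros z Hz0 Hz1; pose proof (sub1_le_mul_ln z Hz0) as Hzl.
    apply Rdiv_lt_0_compat; [nra|].
    apply Rmult_lt_0_compat; [apply Rmult_lt_0_compat|]; lra.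
Qed.

Lemma pstar_eq_defect (x : R) : 0 < x < 1 -> pstar_eq x -> pstar_defect x = 0.
Proof.
  intros Hx Heq; unfold pstar_eq in Heq; unfold pstar_defect.
  apply (f_equal ln) in Heq.
  rewrite ln_Rpower, ln_pow in Heq by lra; simpl INR in Heq; lra.
Qed.

Lemma sq_one_minus_le_Rpower (x : R) : 0 < x < 1 -> 0 <= pstar_defect x ->
  (1 - x) ^ 2 <= Rpower x ((2 - x) / (1 - x)).
Proof.
  intros Hx Hdef; unfold pstar_defect in Hdef.
  rewrite <- (exp_ln ((1 - x) ^ 2)), ln_pow by (try apply pow_lt; lra).
  unfold Rpower; apply exp_le_exp; simpl INR; lra.
Qed.

Lemma pstar_defect_nonneg (pstar x : R) : 0 < pstar < 1 -> pstar_eq pstar ->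
  pstar <= x < 1 -> 0 <= pstar_defect x.
Proof.
  intros Hps Heq Hx; rewrite <- (pstar_eq_defect pstar Hps Heq).
  destruct (Req_dec pstar x) as [-> | Hne]; [lra|].
  left; apply pstar_defect_increasing; lra.
Qed.

Theorem lemma4 (pstar : R) (Hps : 0 < pstar < 1) (Heq : pstar_eq pstar)
  (p : R) (Hp : pstar <= p < 1) (l : nat) :
  RInt (fun t => (1 - t) ^ l / Rpower t p) (Rpower p (1 / (1 - p))) 1
    >= (1 - p) ^ l.
Proof.
  set (a := Rpower p (1 / (1 - p))).
  assert (Ha1p : Rpower a (1 - p) = p).
  { unfold a; rewrite Rpower_mult; replace (1 / (1 - p) * (1 - p)) with 1 by (field; lra).
    apply Rpower_1; lra. }
  assert (Ha2p : Rpower a (2 - p) = p * a).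
  { replace (2 - p) with ((1 - p) + 1) by ring.
    rewrite Rpower_plus, Ha1p, Rpower_1 by apply Rpower_pos; reflexivity. }
  assert (Hpa : (1 - p) ^ 2 <= p * a).
  { rewrite <- Ha2p; unfold a; rewrite Rpower_mult.
    replace (1 / (1 - p) * (2 - p)) with ((2 - p) / (1 - p)) by (field; lra).
    apply sq_one_minus_le_Rpower; [lra | exact (pstar_defect_nonneg pstar p Hps Heq Hp)]. }
  assert (Ha : 0 < a <= 1).
  { split; [apply Rpower_pos | left; apply Rpower_lt_1; [lra|]].
    apply Rdiv_lt_0_compat; lra. }
  apply Rle_ge; eapply Rle_trans;
    [| apply (RInt_pow_div_Rpower_ge p (1 - p) a l); lra].
  set (B := INR l * (1 - p) ^ pred l).
  assert (HB : 0 <= B) by (apply Rmult_le_pos; [apply pos_INR | apply pow_le; lra]).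
  unfold affine_over_power_primitive; rewrite !Rpower_1_l, Ha1p, Ha2p.
  assert (Hsurplus : 0 <= B * (p * a - (1 - p) ^ 2) / (2 - p)).
  { apply Rdiv_le_0_compat; [apply Rmult_le_pos|]; lra. }
  apply Rle_trans with ((1 - p) ^ l + B * (p * a - (1 - p) ^ 2) / (2 - p)); [lra|].
  right; field; lra.
Qed.
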